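(* Let $\Pi_1,\Pi_2$ be hereditary class properties, $p$ a positive integer, and $f_1,f_2:\mathbb N\to\mathbb N$ non-decreasing functions. If a class $\mathscr C$ has an $f_i$-bounded $\Pi_i$-decomposition with parameter $p$ for $i=1,2$, then $\mathscr C$ has an $f_1f_2$-bounded $\Pi_1\cap\Pi_2$-decomposition with parameter $p$.
   Context: Graphs are finite and simple. A hereditary class is a class closed under isomorphism and induced subgraphs; a hereditary class property is a set $\Pi$ of hereditary classes such that $\mathscr C\in\Pi$, $\mathscr D$ hereditary, $\mathscr D\subseteq\mathscr C$ imply $\mathscr D\in\Pi$. For non-decreasing $f$ and positive integer $p$, $\mathscr C$ has an $f$-bounded $\Pi$-decomposition with parameter $p$ if there is $\mathscr D_p\in\Pi$ such that every $G\in\mathscr C$ has a partition $V_1,\dots,V_N$ of $V(G)$ with $N\le f(|G|)$ and $G[V_{i_1}\cup\dots\cup V_{i_p}]\in\mathscr D_p$ for all $i_1,\dots,i_p\in[N]$. *)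

From mathcomp Require Import all_boot.
Set Implicit Arguments. Unset Strict Implicit. Unset Printing Implicit Defensive.

Record graph := Graph {
  gV :> finType;
  gE : rel gV;
  gE_sym : symmetric gE;
  gE_irr : irreflexive gE }.

Section Induced.
Variables (G : graph) (S : {set gV G}).
Definition ind_V : finType := {x : gV G | x \in S}.
Definition ind_E : rel ind_V := fun x y => gE (val x) (val y).
Lemma ind_E_sym : symmetric ind_E.
Proof. by move=> x y; rewrite /ind_E gE_sym. Qed.
Lemma ind_E_irr : irreflexive ind_E.
Proof. by move=> x; rewrite /ind_E gE_irr. Qed.
Definition induced : graph := Graph ind_E_sym ind_E_irr.
End Induced.

Definition isomorphic (G H : graph) : Prop :=
  exists f : gV G -> gV H, bijective f /\ forall x y, gE (f x) (f y) = gE x y.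

Definition gclass := graph -> Prop.

Definition hereditary (C : gclass) : Prop :=
  (forall G H, isomorphic G H -> C G -> C H) /\
  (forall G (S : {set gV G}), C G -> C (induced S)).

Definition hereditary_class_property (Pi : gclass -> Prop) : Prop :=
  (forall C, Pi C -> hereditary C) /\
  (forall C D, Pi C -> hereditary D -> (forall G, D G -> C G) -> Pi D).

Definition nondecreasing (f : nat -> nat) : Prop := forall m n, m <= n -> f m <= f n.

(* C has an f-bounded Pi-decomposition with parameter p.  A partition
   V_1,...,V_N of V(G) is encoded by the map part : V(G) -> 'I_N (V_i is the
   preimage of i; parts may be empty).  A choice of indices i_1,...,i_p in [N]
   is a map idx : 'I_p -> 'I_N, and V_{i_1} u ... u V_{i_p} is the set of
   vertices whose part lies in the range of idx. *)
Definition has_bounded_decomposition (f : nat -> nat) (Pi : gclass -> Prop)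
    (p : nat) (C : gclass) : Prop :=
  exists Dp : gclass, Pi Dp /\
    forall G : graph, C G ->
      exists (N : nat) (part : gV G -> 'I_N),
        N <= f #|gV G| /\
        forall idx : 'I_p -> 'I_N,
          Dp (induced [set x : gV G | part x \in codom idx]).

Definition prop_inter (Pi1 Pi2 : gclass -> Prop) : gclass -> Prop :=
  fun C => Pi1 C /\ Pi2 C.

From mathcomp Require Import all_boot.
Set Implicit Arguments. Unset Strict Implicit. Unset Printing Implicit Defensive.

(* Refine the two partitions: the parts of the new partition are the
   intersections V_i ∩ W_j, indexed by the pairs (i, j).  A union of p of these
   parts lies inside a union of p parts of each of the two original partitions,
   so it induces a graph in D_1 and in D_2, i.e. in the class D_1 ∩ D_2, which
   belongs to both properties since it is a hereditary subclass of D_1 and of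
   D_2. *)

Lemma hereditary_induced_sub (D : gclass) (G : graph) (S T : {set gV G}) :
  hereditary D -> S \subset T -> D (induced T) -> D (induced S).
Proof.
move=> [Diso Dind] sST DT.
pose S' : {set gV (induced T)} := [set y | val y \in S].
apply: (Diso (induced S')); last exact: Dind.
have S'S (y : gV (induced S')) : val (val y) \in S by have := valP y; rewrite inE.
have ST (x : gV (induced S)) : val x \in T by apply: (subsetP sST); exact: valP.
have SS' (x : gV (induced S)) : (Sub (val x) (ST x) : gV (induced T)) \in S'.
  by rewrite inE /= (valP x).
exists (fun y : gV (induced S') => (Sub (val (val y)) (S'S y) : gV (induced S))).
split; last by [].
exists (fun x : gV (induced S) => (Sub (Sub (val x) (ST x)) (SS' x) : gV (induced S'))).
- by move=> y; apply: val_inj; apply: val_inj.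
- by move=> x; apply: val_inj.
Qed.

Definition classI (D1 D2 : gclass) : gclass := fun G => D1 G /\ D2 G.

Lemma hereditaryI (D1 D2 : gclass) :
  hereditary D1 -> hereditary D2 -> hereditary (classI D1 D2).
Proof.
move=> [iso1 ind1] [iso2 ind2]; split.
- by move=> G H isoGH [D1G D2G]; split; [exact: iso1 isoGH D1G | exact: iso2 isoGH D2G].
- by move=> G S [D1G D2G]; split; [exact: ind1 | exact: ind2].
Qed.

Lemma prop_inter_classI (Pi1 Pi2 : gclass -> Prop) (D1 D2 : gclass) :
  hereditary_class_property Pi1 -> hereditary_class_property Pi2 ->
  Pi1 D1 -> Pi2 D2 -> prop_inter Pi1 Pi2 (classI D1 D2).
Proof.
move=> [her1 sub1] [her2 sub2] Pi1D1 Pi2D2.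
have herD := hereditaryI (her1 _ Pi1D1) (her2 _ Pi2D2).
by split; [apply: (sub1 D1) => // G [] | apply: (sub2 D2) => // G []].
Qed.

Lemma preim_codom_coarsen (T I J : finType) (p : nat) (r : T -> I) (q : T -> J)
    (h : I -> J) (idx : 'I_p -> I) :
  q =1 h \o r ->
  [set x | r x \in codom idx] \subset [set x | q x \in codom (h \o idx)].
Proof.
move=> qE; apply/subsetP => x; rewrite !inE qE /= => /codomP [i ->].
exact: (codom_f (h \o idx)).
Qed.

Section PairPartition.
Variables (T : finType) (N1 N2 : nat) (q1 : T -> 'I_N1) (q2 : T -> 'I_N2).

Definition pair_part (x : T) : 'I_#|{: 'I_N1 * 'I_N2}| := enum_rank (q1 x, q2 x).

Lemma card_pair_part : #|{: 'I_N1 * 'I_N2}| = N1 * N2.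
Proof. by rewrite card_prod !card_ord. Qed.

Lemma pair_part1 : q1 =1 (fun k => (enum_val k).1) \o pair_part.
Proof. by move=> x /=; rewrite enum_rankK. Qed.

Lemma pair_part2 : q2 =1 (fun k => (enum_val k).2) \o pair_part.
Proof. by move=> x /=; rewrite enum_rankK. Qed.

End PairPartition.

Theorem mainTheorem9 (Pi1 Pi2 : gclass -> Prop) (p : nat) (f1 f2 : nat -> nat)
    (C : gclass) :
  hereditary_class_property Pi1 -> hereditary_class_property Pi2 ->
  0 < p -> nondecreasing f1 -> nondecreasing f2 ->
  has_bounded_decomposition f1 Pi1 p C ->
  has_bounded_decomposition f2 Pi2 p C ->
  has_bounded_decomposition (fun n => f1 n * f2 n) (prop_inter Pi1 Pi2) p C.
Proof.
move=> hcp1 hcp2 _ _ _ [D1 [Pi1D1 dec1]] [D2 [Pi2D2 dec2]].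
exists (classI D1 D2); split; first exact: prop_inter_classI.
move=> G CG.
have [N1 [q1 [leN1 D1q1]]] := dec1 G CG.
have [N2 [q2 [leN2 D2q2]]] := dec2 G CG.
exists #|{: 'I_N1 * 'I_N2}|, (pair_part q1 q2); split.
  by rewrite card_pair_part leq_mul.
move=> idx; split.
- apply: (hereditary_induced_sub (hcp1.1 _ Pi1D1) _ (D1q1 _)).
  exact: preim_codom_coarsen (pair_part1 q1 q2).
- apply: (hereditary_induced_sub (hcp2.1 _ Pi2D2) _ (D2q2 _)).
  exact: preim_codom_coarsen (pair_part2 q1 q2).
Qed.
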